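(* Let $0<\alpha<1$, $\lambda\in\mathbb{R}$, $\tau>0$, and let $\{v^n\}_{n\ge0}$ be a real sequence. Then for every integer $n\ge1$, $$\mathcal{A}_t^{\alpha} v^{n}\cdot \delta_{t}^{\alpha,\lambda}v^n \geq \frac{1}{2}\Big[\frac{\alpha}{2}e^{\lambda \tau}+\Big(1-\frac{\alpha}{2}\Big)\Big] e^{-\frac{\alpha}{2}\lambda \tau} \delta_{t}^{\alpha,2\lambda} (v^n)^2+\frac{2-\alpha-e^{\lambda \tau}}{4}\tau^{\alpha}e^{-\frac{\alpha}{2}\lambda \tau}(\delta_{t}^{\alpha,\lambda}v^n)^2.$$ In particular, when $\alpha=1$ and $\lambda=0$, $$\frac{v^n+v^{n-1}}{2}\cdot\frac{v^n-v^{n-1}}{\tau}=\frac{(v^n)^2-(v^{n-1})^2}{2\tau}.$$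
   Context: $\mathcal{A}_t^{\alpha}v^n=(1-\frac{\alpha}{2})v^n+\frac{\alpha}{2}v^{n-1}$. $g_k^{\alpha}=(-1)^k\binom{\alpha}{k}$ are the coefficients of $(1-z)^{\alpha}=\sum_{k\ge0}g_k^{\alpha}z^k$, and for a constant $\mu$, $g_k^{\alpha,\mu}=e^{-(k-\frac{\alpha}{2})\mu\tau}g_k^{\alpha}$. For a sequence $\{w^n\}$, $\delta_t^{\alpha,\mu}w^n=\tau^{-\alpha}\sum_{k=0}^{n}g_k^{\alpha,\mu}w^{n-k}$; in particular $\delta_{t}^{\alpha,2\lambda}(v^n)^2=\tau^{-\alpha}\sum_{k=0}^{n}g_{k}^{\alpha,2\lambda}(v^{n-k})^2$. *)

From HB Require Import structures.
From mathcomp Require Import all_boot all_order all_algebra.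
From mathcomp Require Import all_classical all_reals all_analysis.
Set Implicit Arguments. Unset Strict Implicit. Unset Printing Implicit Defensive.
Import Order.TTheory GRing.Theory Num.Theory.
Local Open Scope ring_scope.

Definition gbinom {R : realType} (a : R) (k : nat) : R :=
  (\prod_(j < k) (a - j%:R)) / (k`!)%:R.

Definition gcoef {R : realType} (a : R) (k : nat) : R :=
  (-1) ^+ k * gbinom a k.

Definition gcoef_mu {R : realType} (a mu tau : R) (k : nat) : R :=
  expR (- ((k%:R - a / 2) * mu * tau)) * gcoef a k.

Definition delta_t {R : realType} (a mu tau : R) (w : nat -> R) (n : nat) : R :=
  tau `^ (- a) * \sum_(k < n.+1) gcoef_mu a mu tau k * w (n - k)%N.

Definition calA {R : realType} (a : R) (v : nat -> R) (n : nat) : R :=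
  (1 - a / 2) * v n + a / 2 * v n.-1.

(* Write y_k = e^{-k λ τ} v^{n-k}, so that δ_t^{α,λ} v^n and δ_t^{α,2λ} (v^n)^2 become, up to
   positive factors, S = Σ g_k y_k and M = Σ g_k y_k^2, while A_t^α v^n = (1-α/2) y_0 + (α/2) e^{λτ} y_1.
   The Grünwald weights satisfy g_0 = 1, g_1 = -α, g_k <= 0 for k >= 1 and have nonnegative
   partial sums, so Σ g_k (c - y_k)^2 <= (c - y_0)^2 + g_1 (c - y_1)^2 for every c.  Taking
   c = y_0 - S and c = y_0 gives 2 y_0 S - M >= S^2 and 2 y_0 S - M >= α (y_0 - y_1)^2, and the
   claimed inequality is a nonnegative combination of these two bounds and one square. *)

From HB Require Import structures.
From mathcomp Require Import all_boot all_order all_algebra.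
From mathcomp Require Import all_classical all_reals all_analysis.
From mathcomp Require Import ring.
Import Order.TTheory GRing.Theory Num.Theory.
Local Open Scope ring_scope.

Section GrunwaldWeights.
Context {R : realType}.
Implicit Types a : R.

Lemma gcoef0 a : gcoef a 0 = 1.
Proof. by rewrite /gcoef /gbinom big_ord0 expr0 mul1r divr1. Qed.

Lemma gcoefS a k : gcoef a k.+1 = gcoef a k * ((k%:R - a) / k.+1%:R).
Proof.
rewrite /gcoef /gbinom big_ord_recr /= factS natrM exprS.
have fact_neq0 : (k`!)%:R != 0 :> R by rewrite pnatr_eq0 -lt0n fact_gt0.
have kS_neq0 : k.+1%:R != 0 :> R by rewrite pnatr_eq0.
by field; rewrite fact_neq0 addrC natr1 kS_neq0.
Qed.

Lemma gcoef1 a : gcoef a 1 = - a.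
Proof. by rewrite gcoefS gcoef0 mul1r divr1 sub0r. Qed.

Lemma gcoef1SS k : gcoef (1 : R) k.+2 = 0.
Proof.
elim: k => [|k IHk]; last by rewrite gcoefS IHk mul0r.
by rewrite gcoefS subrr mul0r mulr0.
Qed.

Lemma gcoefS_le0 a k : 0 <= a -> a <= 1 -> gcoef a k.+1 <= 0.
Proof.
move=> a_ge0 a_le1; elim: k => [|k IHk]; first by rewrite gcoef1 oppr_le0.
rewrite gcoefS; apply: mulr_le0_ge0 => //; apply: divr_ge0 => //.
by rewrite subr_ge0 -natr1 (le_trans a_le1) // lerDr.
Qed.

(* The partial sums are the coefficients of (1 - z)^(a - 1). *)
Lemma sum_gcoef a n : a != 0 ->
  \sum_(k < n.+1) gcoef a k = - gcoef a n.+1 * n.+1%:R / a.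
Proof.
move=> a_neq0; elim: n => [|n IHn].
  by rewrite big_ord_recl big_ord0 gcoef1 gcoef0; field.
rewrite big_ord_recr /= IHn (gcoefS a n.+1).
have nSS_neq0 : n.+2%:R != 0 :> R by rewrite pnatr_eq0.
by field; rewrite a_neq0 addrC -[2]/(1 + 1) addrA !natr1 nSS_neq0.
Qed.

Lemma sum_gcoef_ge0 a n : 0 < a -> a <= 1 -> 0 <= \sum_(k < n.+1) gcoef a k.
Proof.
move=> a_gt0 a_le1; rewrite sum_gcoef ?gt_eqF //.
apply: divr_ge0; last exact: ltW.
by apply: mulr_ge0 => //; rewrite oppr_ge0 gcoefS_le0 // ltW.
Qed.

End GrunwaldWeights.

Lemma sum_weighted_sq (R : realType) (g y : nat -> R) (c : R) n :
  \sum_(k < n) g k * (c - y k) ^+ 2 =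
  c ^+ 2 * \sum_(k < n) g k - 2 * c * \sum_(k < n) g k * y k
  + \sum_(k < n) g k * y k ^+ 2.
Proof.
by rewrite !mulr_sumr -sumrB -big_split; apply: eq_bigr => k _ /=; ring.
Qed.

Section WeightedSums.
Context {R : realType} {g : nat -> R} (y : nat -> R) {m : nat}.
Hypotheses (g0 : g 0%N = 1) (gS_le0 : forall k, g k.+1 <= 0)
  (sum_g_ge0 : 0 <= \sum_(k < m.+2) g k).

Let S := \sum_(k < m.+2) g k * y k.
Let M := \sum_(k < m.+2) g k * y k ^+ 2.

Lemma sum_weighted_sq_le c :
  \sum_(k < m.+2) g k * (c - y k) ^+ 2 <= (c - y 0%N) ^+ 2 + g 1%N * (c - y 1%N) ^+ 2.
Proof.
rewrite 2!big_ord_recl /bump /= g0 mul1r addrA gerDl.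
by apply: sumr_le0 => i _; rewrite mulr_le0_ge0 ?sqr_ge0.
Qed.

Lemma sq_weighted_sum_le : S ^+ 2 <= 2 * y 0%N * S - M.
Proof.
have := sum_weighted_sq_le (y 0%N - S); rewrite sum_weighted_sq -/S -/M.
set P := \sum_(k < m.+2) g k; set Y := g 1%N * _ => le_head.
have Y_le0 : Y <= 0 by rewrite mulr_le0_ge0 ?sqr_ge0.
rewrite -subr_ge0.
have -> : 2 * y 0%N * S - M - S ^+ 2 = (y 0%N - S) ^+ 2 * P
    + ((y 0%N - S - y 0%N) ^+ 2 + Y - ((y 0%N - S) ^+ 2 * P - 2 * (y 0%N - S) * S + M)) - Y.
  by ring.
apply: addr_ge0; last by rewrite oppr_ge0.
by apply: addr_ge0; [rewrite mulr_ge0 ?sqr_ge0 | rewrite subr_ge0].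
Qed.

Lemma weighted_diff_sq_le : - g 1%N * (y 0%N - y 1%N) ^+ 2 <= 2 * y 0%N * S - M.
Proof.
have := sum_weighted_sq_le (y 0%N); rewrite sum_weighted_sq -/S -/M subrr expr0n add0r.
set P := \sum_(k < m.+2) g k => le_head.
rewrite -subr_ge0.
have -> : 2 * y 0%N * S - M - - g 1%N * (y 0%N - y 1%N) ^+ 2 = y 0%N ^+ 2 * P
    + (g 1%N * (y 0%N - y 1%N) ^+ 2 - (y 0%N ^+ 2 * P - 2 * y 0%N * S + M)).
  by ring.
by apply: addr_ge0; [rewrite mulr_ge0 ?sqr_ge0 | rewrite subr_ge0].
Qed.

Lemma weighted_energy_ge (a E : R) : g 1%N = - a -> 0 <= a -> a <= 2 -> 0 <= E ->
  1 / 2 * (a / 2 * E + (1 - a / 2)) * M + (2 - a - E) / 4 * S ^+ 2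
  <= ((1 - a / 2) * y 0%N + a / 2 * (E * y 1%N)) * S.
Proof.
move=> g1 a_ge0 a_le2 E_ge0; rewrite -subr_ge0.
have -> : ((1 - a / 2) * y 0%N + a / 2 * (E * y 1%N)) * S
    - (1 / 2 * (a / 2 * E + (1 - a / 2)) * M + (2 - a - E) / 4 * S ^+ 2)
  = (2 - a) / 4 * (2 * y 0%N * S - M - S ^+ 2)
    + E / 4 * ((S - a * (y 0%N - y 1%N)) ^+ 2
               + a * (2 * y 0%N * S - M - a * (y 0%N - y 1%N) ^+ 2)).
  by field.
have sq_le := sq_weighted_sum_le; have diff_le := weighted_diff_sq_le.
rewrite g1 opprK in diff_le.
apply: addr_ge0; apply: mulr_ge0; rewrite ?divr_ge0 ?subr_ge0 //.
apply: addr_ge0; first exact: sqr_ge0.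
by apply: mulr_ge0; rewrite ?subr_ge0.
Qed.

End WeightedSums.

Section DampedHistory.
Context {R : realType}.
Implicit Types (a l t : R) (v : nat -> R).

Definition damped_hist l t v (n k : nat) : R := expR (- (k%:R * l * t)) * v (n - k)%N.

Lemma damped_hist0 l t v n : damped_hist l t v n 0 = v n.
Proof. by rewrite /damped_hist !mul0r oppr0 expR0 mul1r subn0. Qed.

Lemma damped_hist1 l t v n : expR (l * t) * damped_hist l t v n.+1 1 = v n.
Proof. by rewrite /damped_hist mul1r subSS subn0 mulrA -expRD subrr expR0 mul1r. Qed.

Lemma delta_t_damped a l t v n : delta_t a l t v n =
  t `^ (- a) * expR (a / 2 * l * t) * \sum_(k < n.+1) gcoef a k * damped_hist l t v n k.
Proof.
rewrite /delta_t -mulrA; congr (_ * _); rewrite mulr_sumr; apply: eq_bigr => k _.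
rewrite /gcoef_mu.
have -> : expR (- ((k%:R - a / 2) * l * t))
    = expR (a / 2 * l * t) * expR (- (k%:R * l * t)).
  by rewrite -expRD; congr expR; ring.
by rewrite /damped_hist; ring.
Qed.

Lemma delta_t_sq_damped a l t v n : delta_t a (2 * l) t (fun m => v m ^+ 2) n =
  t `^ (- a) * expR (a / 2 * l * t) ^+ 2
  * \sum_(k < n.+1) gcoef a k * damped_hist l t v n k ^+ 2.
Proof.
rewrite /delta_t -mulrA; congr (_ * _); rewrite mulr_sumr; apply: eq_bigr => k _.
rewrite /gcoef_mu.
have -> : expR (- ((k%:R - a / 2) * (2 * l) * t))
    = expR (a / 2 * l * t) ^+ 2 * expR (- (k%:R * l * t)) ^+ 2.
  by rewrite -exprMn -expRD expr2 -expRD; congr expR; ring.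
by rewrite /damped_hist; ring.
Qed.

Lemma calA_delta_t_ge a l t v n : 0 < a -> a <= 1 -> 0 < t ->
  calA a v n.+1 * delta_t a l t v n.+1 >=
    1 / 2 * (a / 2 * expR (l * t) + (1 - a / 2)) * expR (- (a / 2 * l * t))
      * delta_t a (2 * l) t (fun m => v m ^+ 2) n.+1
    + (2 - a - expR (l * t)) / 4 * t `^ a * expR (- (a / 2 * l * t))
      * delta_t a l t v n.+1 ^+ 2.
Proof.
move=> a_gt0 a_le1 t_gt0.
have a_le2 : a <= 2 by rewrite (le_trans a_le1) ?ler1n.
rewrite delta_t_sq_damped delta_t_damped /calA /=.
set K := t `^ (- a); set X := expR (a / 2 * l * t); set E := expR (l * t).
set M := \sum_(k < n.+2) _ * _ ^+ 2; set S := \sum_(k < n.+2) _ * _.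
have K_gt0 : 0 < K by rewrite powR_gt0.
have X_gt0 : 0 < X by rewrite expR_gt0.
have -> : t `^ a = K^-1 by rewrite /K powRN invrK.
rewrite expRN -/X.
have := weighted_energy_ge (damped_hist l t v n.+1) (gcoef0 a)
  (fun k => gcoefS_le0 a k (ltW a_gt0) a_le1) (sum_gcoef_ge0 a n.+1 a_gt0 a_le1)
  a E (gcoef1 a) (ltW a_gt0) a_le2 (ltW (expR_gt0 (l * t))).
rewrite -/M -/S damped_hist0 damped_hist1 => energy_ge.
have -> : 1 / 2 * (a / 2 * E + (1 - a / 2)) / X * (K * X ^+ 2 * M)
    + (2 - a - E) / 4 / K / X * (K * X * S) ^+ 2
  = K * X * (1 / 2 * (a / 2 * E + (1 - a / 2)) * M + (2 - a - E) / 4 * S ^+ 2).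
  by field; rewrite !gt_eqF.
have -> : ((1 - a / 2) * v n.+1 + a / 2 * v n) * (K * X * S)
  = K * X * (((1 - a / 2) * v n.+1 + a / 2 * v n) * S) by ring.
by apply: ler_wpM2l => //; rewrite mulr_ge0 ?ltW.
Qed.

End DampedHistory.

Lemma delta_t_1_0 (R : realType) (t : R) (w : nat -> R) n : 0 <= t ->
  delta_t 1 0 t w n.+1 = (w n.+1 - w n) / t.
Proof.
move=> t_ge0; rewrite /delta_t powRN powRr1 // 2!big_ord_recl big1 => [|k _]; last first.
  by rewrite /gcoef_mu gcoef1SS mulr0 mul0r.
rewrite /gcoef_mu /= !(mulr0, mul0r, oppr0, expR0, mul1r) -[bump 0 0]/1%N.
rewrite gcoef0 gcoef1 subn0 subSS subn0 addr0.
by rewrite mulrC; ring.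
Qed.

Theorem lemma4p2 (R : realType) (alpha lambda tau : R) (v : nat -> R)
  (halpha0 : 0 < alpha) (halpha1 : alpha < 1) (htau : 0 < tau) :
  (forall n : nat, (1 <= n)%N ->
     calA alpha v n * delta_t alpha lambda tau v n >=
       1 / 2 * (alpha / 2 * expR (lambda * tau) + (1 - alpha / 2))
         * expR (- (alpha / 2 * lambda * tau))
         * delta_t alpha (2 * lambda) tau (fun m => v m ^+ 2) n
     + (2 - alpha - expR (lambda * tau)) / 4 * tau `^ alpha
         * expR (- (alpha / 2 * lambda * tau))
         * (delta_t alpha lambda tau v n) ^+ 2)
  /\
  (forall n : nat, (1 <= n)%N ->
     calA 1 v n * delta_t 1 0 tau v n
       = 1 / 2 * delta_t 1 0 tau (fun m => v m ^+ 2) n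
     /\ (v n + v n.-1) / 2 * ((v n - v n.-1) / tau)
       = (v n ^+ 2 - v n.-1 ^+ 2) / (2 * tau)).
Proof.
have tau_neq0 : tau != 0 by rewrite gt_eqF.
split=> -[//|n] _; first exact: calA_delta_t_ge (ltW halpha1) htau.
rewrite !delta_t_1_0 ?ltW // /calA /=.
by split; field.
Qed.
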